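(* Let $k\ge1$ and let $G_{k+1}=H_1\star_{C_1}H_2\star_{C_2}\cdots H_k\star_{C_k}H_{k+1}$ be an iterated amalgamated free product, where each $C_i$ embeds in $H_i$ and in $H_{i+1}$. Suppose for some $2\le n\le\infty$ the image of each $C_i$ in $H_i$ and in $H_{i+1}$ is $n$-RF (i.e. the pairs $(H_i,C_i)$ and $(H_{i+1},C_i)$ are $n$-RF). Then the subgroups $G_k=H_1\star_{C_1}\cdots H_k$ and $H_{k+1}$ are both $n$-RF in $G_{k+1}$, i.e. $(G_{k+1},G_k)$ and $(G_{k+1},H_{k+1})$ are $n$-RF.
   Context: For a group $G$, subgroup $D$, and $2\le n\le\infty$: $a\in G\setminus D$ is $n$-RF rel $D$ if $a^{e_1}d_1\cdots a^{e_k}d_k\ne\mathrm{id}$ for all $k\ge1$, $e_i\in\{\pm1\}$, $d_i\in D$ such that $d_i\ne\mathrm{id}$ whenever $e_i=-e_{i+1}$ (indices mod $k$), and fewer than $n$ of the $e_i$ are $+1$ and fewer than $n$ are $-1$. The pair $(G,D)$ is $n$-RF if every element of $G\setminus D$ is $n$-RF rel $D$. *)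

From Stdlib Require Import List Arith.
Import ListNotations.

Record Grp := {
  gcar :> Type;
  gmul : gcar -> gcar -> gcar;
  gone : gcar;
  ginv : gcar -> gcar;
  gassoc : forall x y z, gmul x (gmul y z) = gmul (gmul x y) z;
  gmul1l : forall x, gmul gone x = x;
  gmulVl : forall x, gmul (ginv x) x = gone
}.

Arguments gmul {g} _ _.
Arguments gone {g}.
Arguments ginv {g} _.

Definition is_hom (A B : Grp) (f : A -> B) : Prop :=
  forall x y, f (gmul x y) = gmul (f x) (f y).

Definition injective {A B : Type} (f : A -> B) : Prop :=
  forall x y, f x = f y -> x = y.

Definition image {A B : Type} (f : A -> B) : B -> Prop :=
  fun y => exists x, y = f x.

(* P with iA, iB is the amalgamated free product A *_C B along f : C -> A,
   g : C -> B, defined by its universal property (pushout of groups). *)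
Definition is_amalgam (C A B P : Grp) (f : C -> A) (g : C -> B)
    (iA : A -> P) (iB : B -> P) : Prop :=
  is_hom A P iA /\ is_hom B P iB /\ (forall c, iA (f c) = iB (g c)) /\
  forall (K : Grp) (hA : A -> K) (hB : B -> K),
    is_hom A K hA -> is_hom B K hB -> (forall c, hA (f c) = hB (g c)) ->
    (exists h : P -> K, is_hom P K h /\ (forall a, h (iA a) = hA a) /\
                        (forall b, h (iB b) = hB b)) /\
    (forall h1 h2 : P -> K,
        is_hom P K h1 -> (forall a, h1 (iA a) = hA a) -> (forall b, h1 (iB b) = hB b) ->
        is_hom P K h2 -> (forall a, h2 (iA a) = hA a) -> (forall b, h2 (iB b) = hB b) ->
        forall x, h1 x = h2 x).

(* n in {2,...,oo}: None stands for oo. *)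
Definition below (n : option nat) (m : nat) : Prop :=
  match n with None => True | Some n' => m < n' end.

Definition gpow {G : Grp} (e : bool) (a : G) : G := if e then a else ginv a.

(* a^{e_1} d_1 ... a^{e_k} d_k for w = [(e_1,d_1); ...; (e_k,d_k)] *)
Definition word_eval {G : Grp} (a : G) (w : list (bool * G)) : G :=
  fold_right (fun p acc => gmul (gmul (gpow (fst p) a) (snd p)) acc) gone w.

(* a is n-RF relative to D (a is assumed outside D in the definition of pairs) *)
Definition nRF_rel (G : Grp) (D : G -> Prop) (n : option nat) (a : G) : Prop :=
  forall w : list (bool * G),
    w <> [] ->
    (forall i, i < length w -> D (snd (nth i w (true, gone)))) ->
    (forall i, i < length w ->
        fst (nth i w (true, gone)) = negb (fst (nth ((i + 1) mod length w) w (true, gone))) ->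
        snd (nth i w (true, gone)) <> gone) ->
    below n (length (filter (fun p => fst p) w)) ->
    below n (length (filter (fun p => negb (fst p)) w)) ->
    word_eval a w <> gone.

Definition nRF_pair (G : Grp) (D : G -> Prop) (n : option nat) : Prop :=
  forall a : G, ~ D a -> nRF_rel G D n a.

(* The heart of the matter is a single amalgam P = A *_C B in which (A, C) and (B, C) are
   n-RF: then A (and symmetrically B) is n-RF in P.  An element x of P outside A is
   a0 x0 a1 with x0 a reduced alternating product beginning and ending in B, and
   conjugation turns a cyclically reduced word in x with coefficients in A into one in x0.
   By induction on the syllable length of x0, exchanging A and B at each step, a word in
   x0 with coefficients in C is again a reduced B...B product: a junction between two
   consecutive letters is a syllable of B outside C unless the letters have the same sign
   (C is malnormal in B, a consequence of the n-RF property), and blocks of letters of one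
   sign fall under the induction hypothesis.  A coefficient of A outside C contributes an
   A-syllable of its own.  So the word evaluates to a nontrivial reduced product, which is
   not 1 by the normal form theorem, proved with van der Waerden's action on normal forms.
   The iterated amalgam follows by induction on k, as the n-RF property is transitive
   along C_i <= H_i <= G_i. *)

From Stdlib Require Import List Arith Lia.
From Stdlib Require Import Classical ClassicalEpsilon FunctionalExtensionality.
From Stdlib Require Import ProofIrrelevance PropExtensionality.
Import ListNotations.

Infix "**" := gmul (at level 40, left associativity).

Section GroupFacts.
Context {G : Grp}.
Implicit Types x y z : G.

Lemma mulgA x y z : x ** (y ** z) = x ** y ** z.
Proof. apply gassoc. Qed.

Lemma mul1g x : gone ** x = x.
Proof. apply gmul1l. Qed.

Lemma mulVg x : ginv x ** x = gone.
Proof. apply gmulVl. Qed.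

Lemma mulgV x : x ** ginv x = gone.
Proof.
  rewrite <- (mul1g (x ** ginv x)), <- (mulVg (ginv x)) at 1.
  rewrite <- mulgA, (mulgA (ginv x) x), mulVg, mul1g. apply mulVg.
Qed.

Lemma mulg1 x : x ** gone = x.
Proof. rewrite <- (mulVg x), mulgA, mulgV, mul1g. reflexivity. Qed.

Lemma mulKg x y : ginv x ** (x ** y) = y.
Proof. rewrite mulgA, mulVg, mul1g. reflexivity. Qed.

Lemma mulgK x y : x ** y ** ginv y = x.
Proof. rewrite <- mulgA, mulgV, mulg1. reflexivity. Qed.

Lemma mulgKV x y : x ** ginv y ** y = x.
Proof. rewrite <- mulgA, mulVg, mulg1. reflexivity. Qed.

Lemma mulg_injl x y z : x ** y = x ** z -> y = z.
Proof. intro E. rewrite <- (mulKg x y), E, mulKg. reflexivity. Qed.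

Lemma mulg_injr x y z : y ** x = z ** x -> y = z.
Proof. intro E. rewrite <- (mulgK y x), E, mulgK. reflexivity. Qed.

Lemma mulg_eq1_l x y : x ** y = gone -> x = ginv y.
Proof. intro E. apply (mulg_injr y). rewrite E, mulVg. reflexivity. Qed.

Lemma mulg_eq1_r x y : x ** y = gone -> y = ginv x.
Proof. intro E. apply (mulg_injl x). rewrite E, mulgV. reflexivity. Qed.

Lemma invgK x : ginv (ginv x) = x.
Proof. symmetry. apply mulg_eq1_r, mulVg. Qed.

Lemma invg1 : ginv (@gone G) = gone.
Proof. symmetry. apply mulg_eq1_r, mul1g. Qed.

Lemma invgM x y : ginv (x ** y) = ginv y ** ginv x.
Proof.
  symmetry. apply mulg_eq1_r. rewrite mulgA, <- (mulgA x y), mulgV, mulg1, mulgV.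
  reflexivity.
Qed.

Lemma invg_eq1 x : ginv x = gone -> x = gone.
Proof. intro E. rewrite <- (invgK x), E. apply invg1. Qed.

Lemma conjg_eq1 x y : x ** y ** ginv x = gone -> y = gone.
Proof.
  intro E. apply mulg_eq1_l in E. rewrite invgK in E.
  apply (mulg_injl x). rewrite mulg1. exact E.
Qed.

End GroupFacts.

Section Homomorphisms.
Context {A B : Grp} {h : A -> B} (h_hom : is_hom A B h).

Lemma hom1 : h gone = gone.
Proof. apply (mulg_injl (h gone)). rewrite <- h_hom, !mulg1. reflexivity. Qed.

Lemma homV x : h (ginv x) = ginv (h x).
Proof. apply mulg_eq1_r. rewrite <- h_hom, mulgV. apply hom1. Qed.

End Homomorphisms.

Lemma hom_comp (A B C : Grp) (h1 : A -> B) (h2 : B -> C) :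
  is_hom A B h1 -> is_hom B C h2 -> is_hom A C (fun x => h2 (h1 x)).
Proof. intros H1 H2 x y. rewrite H1, H2. reflexivity. Qed.

Lemma inj_comp (A B C : Type) (h1 : A -> B) (h2 : B -> C) :
  injective h1 -> injective h2 -> injective (fun x => h2 (h1 x)).
Proof. intros I1 I2 x y E. apply I1, I2, E. Qed.

Definition subgroup {G : Grp} (D : G -> Prop) : Prop :=
  D gone /\ (forall x y, D x -> D y -> D (x ** y)) /\ (forall x, D x -> D (ginv x)).

Lemma image_subgroup (A B : Grp) (h : A -> B) : is_hom A B h -> subgroup (image h).
Proof.
  intro Hh. split; [|split].
  - exists gone. symmetry. apply (hom1 Hh).
  - intros x y [a ->] [b ->]. exists (a ** b). symmetry. apply Hh.
  - intros x [a ->]. exists (ginv a). symmetry. apply (homV Hh).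
Qed.

Section Cosets.
Context {X C : Grp} {h : C -> X} (h_hom : is_hom C X h).

Lemma image_mull c y : image h (h c ** y) -> image h y.
Proof.
  intros [c' E]. exists (ginv c ** c').
  rewrite h_hom, <- E, (homV h_hom), mulKg. reflexivity.
Qed.

Lemma image_mulr y c : image h (y ** h c) -> image h y.
Proof.
  intros [c' E]. exists (c' ** ginv c).
  rewrite h_hom, <- E, (homV h_hom), mulgK. reflexivity.
Qed.

Lemma image_inv y : image h (ginv y) -> image h y.
Proof. intros [c E]. exists (ginv c). rewrite (homV h_hom), <- E, invgK. reflexivity. Qed.

End Cosets.

(** * Words and the n-RF property *)

Lemma gpow_negb {G : Grp} (e : bool) (x : G) : gpow (negb e) x = ginv (gpow e x).
Proof. destruct e; simpl; [reflexivity | rewrite invgK; reflexivity]. Qed.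

Lemma word_eval_app {G : Grp} (x : G) u v :
  word_eval x (u ++ v) = word_eval x u ** word_eval x v.
Proof.
  induction u as [|p u IH]; simpl.
  - rewrite mul1g. reflexivity.
  - rewrite IH, !mulgA. reflexivity.
Qed.

Lemma word_eval_snoc {G : Grp} (x : G) u e d z :
  word_eval x (u ++ [(e, d)]) ** z = word_eval x (u ++ [(e, d ** z)]).
Proof. rewrite !word_eval_app. simpl. rewrite !mulg1, !mulgA. reflexivity. Qed.

Definition map_coeffs {A B : Type} (h : A -> B) (w : list (bool * A)) : list (bool * B) :=
  map (fun p => (fst p, h (snd p))) w.

Lemma word_eval_map {A B : Grp} {h : A -> B} (Hh : is_hom A B h) (x : A) w :
  word_eval (h x) (map_coeffs h w) = h (word_eval x w).
Proof.
  induction w as [|[e d] w IH]; simpl.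
  - symmetry. apply (hom1 Hh).
  - rewrite IH, !Hh. destruct e; simpl; [reflexivity | rewrite (homV Hh); reflexivity].
Qed.

Definition coeffs_in {G : Grp} (D : G -> Prop) (w : list (bool * G)) : Prop :=
  Forall (fun p => D (snd p)) w.

(* [a^e d a^e'] cancels freely exactly when [e' = -e] and [d = 1]. *)
Definition no_cancel {G : Grp} (p q : bool * G) : Prop :=
  fst p = negb (fst q) -> snd p <> gone.

Fixpoint reduced {G : Grp} (w : list (bool * G)) : Prop :=
  match w with
  | p :: (q :: _) as r => no_cancel p q /\ reduced r
  | _ => True
  end.

Definition cyc_reduced {G : Grp} (w : list (bool * G)) : Prop :=
  reduced w /\ forall p r, w = p :: r -> no_cancel (last w p) p.

Definition nsign {G : Grp} (e : bool) (w : list (bool * G)) : nat :=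
  length (filter (fun p => if e then fst p else negb (fst p)) w).

Definition bounded {G : Grp} (n : option nat) (w : list (bool * G)) : Prop :=
  forall e, below n (nsign e w).

Lemma below_le n m m' : below n m -> m' <= m -> below n m'.
Proof. destruct n; simpl; lia. Qed.

Lemma below_le1 n (Hn : forall m, n = Some m -> 2 <= m) m : m <= 1 -> below n m.
Proof. destruct n as [m'|]; simpl; auto. specialize (Hn m' eq_refl). lia. Qed.

Lemma nsign_app {G : Grp} e (u v : list (bool * G)) : nsign e (u ++ v) = nsign e u + nsign e v.
Proof. unfold nsign. rewrite filter_app, length_app. reflexivity. Qed.

Lemma nsign_cons {G : Grp} e (p : bool * G) w :
  nsign e (p :: w) = (if Bool.eqb e (fst p) then 1 else 0) + nsign e w.
Proof. destruct p as [e' d]. unfold nsign. destruct e, e'; reflexivity. Qed.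

Lemma nsign_map_coeffs {A B : Grp} (h : A -> B) e (w : list (bool * A)) :
  nsign e (map_coeffs h w) = nsign e w.
Proof.
  induction w as [|p w IH]; [reflexivity |]. simpl map_coeffs. rewrite !nsign_cons, IH.
  reflexivity.
Qed.

Lemma bounded_le {G : Grp} n (w w' : list (bool * G)) :
  (forall e, nsign e w' <= nsign e w) -> bounded n w -> bounded n w'.
Proof. intros Hle Hw e. exact (below_le _ _ _ (Hw e) (Hle e)). Qed.


Lemma reduced_cons_inv {G : Grp} (p : bool * G) w : reduced (p :: w) -> reduced w.
Proof. destruct w; simpl; tauto. Qed.

Lemma reduced_nth {G : Grp} (w : list (bool * G)) d :
  reduced w <-> forall i, S i < length w -> no_cancel (nth i w d) (nth (S i) w d).
Proof.
  induction w as [|p [|q r] IH]; simpl.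
  - split; [intros _ i Hi; lia | auto].
  - split; [intros _ i Hi; lia | auto].
  - rewrite IH. split.
    + intros [Hpq Hr] [|i] Hi; [exact Hpq | apply Hr; simpl in *; lia].
    + intros Hall. split; [apply (Hall 0); lia |].
      intros i Hi. apply (Hall (S i)). simpl in *; lia.
Qed.

Lemma reduced_app {G : Grp} (u : list (bool * G)) q v :
  u <> [] -> (reduced (u ++ q :: v) <-> reduced u /\ reduced (q :: v) /\ no_cancel (last u q) q).
Proof.
  induction u as [|p [|p' u] IH]; intro Hu; [congruence | simpl; tauto |].
  change ((p :: p' :: u) ++ q :: v) with (p :: ((p' :: u) ++ q :: v)).
  change (last (p :: p' :: u) q) with (last (p' :: u) q).
  simpl reduced at 1. rewrite IH by discriminate.
  change (reduced (p :: p' :: u)) with (no_cancel p p' /\ reduced (p' :: u)). tauto.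
Qed.

Lemma last_indep {T : Type} (l : list T) d d' : l <> [] -> last l d = last l d'.
Proof.
  induction l as [|a [|b l] IH]; intro Hl; [congruence | reflexivity |].
  apply IH. discriminate.
Qed.

Lemma last_app_cons {T : Type} (u v : list T) q d : last (u ++ q :: v) d = last (q :: v) d.
Proof. induction u as [|a [|b u] IH]; simpl in *; auto. Qed.

Lemma reduced_snoc {G : Grp} {u : list (bool * G)} {e d d'} :
  reduced (u ++ [(e, d)]) -> reduced (u ++ [(e, d')]).
Proof.
  destruct u as [|p u]; [simpl; auto|].
  rewrite !reduced_app by discriminate. intros [Hu [_ J]]. split; [exact Hu | split; [exact I |]].
  rewrite (last_indep _ _ (e, d)) by discriminate. exact J.
Qed.

Lemma reduced_prefix {G : Grp} (u v : list (bool * G)) : reduced (u ++ v) -> reduced u.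
Proof.
  destruct u as [|p u]; [simpl; auto|]. destruct v as [|q v]; [rewrite app_nil_r; auto|].
  rewrite reduced_app by discriminate. tauto.
Qed.

Lemma reduced_suffix {G : Grp} (u v : list (bool * G)) : reduced (u ++ v) -> reduced v.
Proof. induction u as [|p u IH]; simpl; auto. intro H. apply IH, (reduced_cons_inv p), H. Qed.

Lemma cyc_reduced_rot {G : Grp} (u v : list (bool * G)) :
  u <> [] -> v <> [] -> cyc_reduced (u ++ v) -> cyc_reduced (v ++ u).
Proof.
  intros Hu Hv [Hc Hl]. destruct u as [|p u]; [congruence|]. destruct v as [|q v]; [congruence|].
  rewrite reduced_app in Hc by discriminate. destruct Hc as [Ru [Rv J]].
  specialize (Hl p (u ++ q :: v) eq_refl). rewrite last_app_cons in Hl.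
  split.
  - rewrite reduced_app by discriminate. tauto.
  - intros p' r E. injection E as <- _. rewrite last_app_cons. exact J.
Qed.

Lemma reduced_map_coeffs (A B : Grp) (h : A -> B) (w : list (bool * A)) :
  h gone = gone -> reduced (map_coeffs h w) -> reduced w.
Proof.
  intro H1. induction w as [|p [|p' w] IH]; simpl; auto.
  intros [J R]. split; [| exact (IH R)].
  intros E Hd. apply (J E). simpl. rewrite Hd. exact H1.
Qed.

Lemma cyc_reduced_map_coeffs (A B : Grp) (h : A -> B) (w : list (bool * A)) :
  h gone = gone -> cyc_reduced (map_coeffs h w) -> cyc_reduced w.
Proof.
  intros H1 [R L]. split; [exact (reduced_map_coeffs A B h w H1 R) |].
  intros p r ->. specialize (L _ _ eq_refl).
  assert (El : forall d, last (map_coeffs h (p :: r)) (fst d, h (snd d))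
                         = (fst (last (p :: r) d), h (snd (last (p :: r) d)))).
  { intro d. generalize (p :: r). induction l as [|q [|q' l] IHl]; simpl in *; auto. }
  rewrite El in L. intros E Hd. apply (L E). cbn [snd]. rewrite Hd. exact H1.
Qed.

Lemma nth_last {T : Type} (l : list T) d : l <> [] -> nth (length l - 1) l d = last l d.
Proof.
  induction l as [|a [|b l] IH]; intro Hl; [congruence | reflexivity |].
  change (last (a :: b :: l) d) with (last (b :: l) d). rewrite <- IH by discriminate.
  simpl length. replace (S (S (length l)) - 1) with (S (S (length l) - 1)) by lia. reflexivity.
Qed.

Lemma cyc_reduced_nth {G : Grp} (w : list (bool * G)) : w <> [] ->
  cyc_reduced w <->
  (forall i, i < length w ->
     fst (nth i w (true, gone)) = negb (fst (nth ((i + 1) mod length w) w (true, gone))) ->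
     snd (nth i w (true, gone)) <> gone).
Proof.
  intro Hw. assert (Hlen : 0 < length w) by (destruct w; simpl; [congruence | lia]).
  unfold cyc_reduced. rewrite (reduced_nth w (true, gone)). split.
  - intros [Hr Hl] i Hi. destruct (Nat.eq_dec (S i) (length w)) as [E|E].
    + replace ((i + 1) mod length w) with 0
        by (replace (i + 1) with (length w) by lia; rewrite Nat.Div0.mod_same; lia).
      destruct w as [|p r]; [congruence|].
      specialize (Hl p r eq_refl).
      rewrite (last_indep _ _ (true, gone)), <- nth_last in Hl by auto.
      replace (length (p :: r) - 1) with i in Hl by lia. exact Hl.
    + rewrite Nat.mod_small by lia. replace (i + 1) with (S i) by lia. apply Hr. lia.
  - intros H. split.
    + intros i Hi J. apply H; [lia |].
      rewrite Nat.mod_small by lia. replace (i + 1) with (S i) by lia. exact J.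
    + intros p r E. rewrite !(last_indep _ _ (true, gone)), <- nth_last by auto.
      replace p with (nth 0 w (true, gone)) by (rewrite E; reflexivity).
      intro J. apply H; [lia |].
      replace (length w - 1 + 1) with (length w) by lia. rewrite Nat.Div0.mod_same. exact J.
Qed.

Lemma coeffs_in_nth {G : Grp} (D : G -> Prop) (w : list (bool * G)) :
  coeffs_in D w <-> (forall i, i < length w -> D (snd (nth i w (true, gone)))).
Proof.
  unfold coeffs_in. rewrite Forall_nth. split.
  - intros H i Hi. apply H, Hi.
  - intros H i d Hi. rewrite (nth_indep w d (true, gone)) by exact Hi. apply H, Hi.
Qed.

Lemma nRF_relE (G : Grp) (D : G -> Prop) n x :
  nRF_rel G D n x <->
  forall w, w <> [] -> coeffs_in D w -> cyc_reduced w -> bounded n w -> word_eval x w <> gone.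
Proof.
  split.
  - intros H w Hw HD Hc Hb. apply H; [exact Hw | apply coeffs_in_nth, HD |
      apply (cyc_reduced_nth w Hw), Hc | apply (Hb true) | apply (Hb false)].
  - intros H w Hw HD Hc B1 B2. apply H; [exact Hw | apply coeffs_in_nth, HD |
      apply (cyc_reduced_nth w Hw), Hc | intros []; assumption].
Qed.

Lemma no_cancel_self {G : Grp} (p : bool * G) : no_cancel p p.
Proof. destruct p as [[] d]; discriminate. Qed.

Lemma word_snoc_mul {G : Grp} (D : G -> Prop) n (w : list (bool * G)) e d z :
  subgroup D -> D z ->
  coeffs_in D (w ++ [(e, d)]) -> reduced (w ++ [(e, d)]) -> bounded n (w ++ [(e, d)]) ->
  coeffs_in D (w ++ [(e, d ** z)]) /\ reduced (w ++ [(e, d ** z)]) /\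
  bounded n (w ++ [(e, d ** z)]).
Proof.
  intros [_ [DM _]] Dz HD Hr Hb. split; [| split].
  - apply Forall_app in HD as [HD1 HD2]. inversion HD2.
    apply Forall_app. split; [exact HD1 | constructor; [apply DM |]; assumption].
  - exact (reduced_snoc Hr).
  - refine (bounded_le n _ _ _ Hb). intro e'. rewrite !nsign_app. unfold nsign.
    destruct e, e'; simpl; lia.
Qed.

(* Correcting the last coefficient by [delta^-1] turns [w] into a relator; the n-RF
   property leaves only the case where this relator is not cyclically reduced, which
   exhibits a shorter word with value in [D]. *)
Lemma nRF_word_notin (G : Grp) (D : G -> Prop) n :
  subgroup D -> nRF_pair G D n ->
  forall x, ~ D x -> forall w, w <> [] -> coeffs_in D w -> reduced w -> bounded n w ->
  ~ D (word_eval x w).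
Proof.
  intros HD_sub HRF x Hx w. remember (length w) as L eqn:HL. revert w HL.
  induction L as [L IH] using lt_wf_ind. intros w HL Hw HD Hr Hb Dv.
  destruct (exists_last Hw) as [w0 [[em dm] Ew]]. subst w.
  set (delta := word_eval x (w0 ++ [(em, dm)])) in *.
  destruct (word_snoc_mul D n w0 em dm (ginv delta) HD_sub (proj2 (proj2 HD_sub) _ Dv) HD Hr Hb)
    as [HDs [Hrs Hbs]].
  assert (Vs : word_eval x (w0 ++ [(em, dm ** ginv delta)]) = gone)
    by (rewrite <- word_eval_snoc; apply mulgV).
  assert (RFx := proj1 (nRF_relE G D n x) (HRF x Hx) (w0 ++ [(em, dm ** ginv delta)])
                  ltac:(destruct w0; discriminate) HDs).
  destruct w0 as [|[e1 d1] w1].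
  { apply RFx; [split; [exact Hrs | intros p r E] | exact Hbs | exact Vs].
    injection E as <- _. apply no_cancel_self. }
  destruct (classic (em = negb e1 /\ dm ** ginv delta = gone)) as [[Ee Ed]|NE].
  2:{ apply RFx; [split; [exact Hrs | intros p r E] | exact Hbs | exact Vs].
      injection E as <- _. rewrite last_app_cons. intros Hj Hd. apply NE. split; assumption. }
  rewrite Ed, word_eval_app in Vs. simpl in Vs.
  rewrite Ee, gpow_negb, !mulg1, <- (mulgA _ d1) in Vs.
  apply conjg_eq1 in Vs.
  destruct w1 as [|p w1'].
  - simpl in Vs, Hr. rewrite mulg1 in Vs. apply (proj1 Hr); [| exact Vs].
    simpl. rewrite Ee. destruct e1; reflexivity.
  - apply (IH (length (p :: w1'))) with (w := p :: w1'); [| reflexivity | discriminate | ..].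
    + rewrite HL. simpl. rewrite length_app. simpl. lia.
    + inversion HD as [|? ? _ HD']. rewrite app_comm_cons in HD'. apply Forall_app in HD'. tauto.
    + apply reduced_cons_inv in Hr. rewrite app_comm_cons in Hr. exact (reduced_prefix _ _ Hr).
    + refine (bounded_le n _ _ _ Hb). intro e. simpl app. rewrite !nsign_cons, nsign_app. lia.
    + apply mulg_eq1_r in Vs. rewrite Vs. apply (proj2 (proj2 HD_sub)).
      inversion HD. assumption.
Qed.

Lemma nRF_conj_notin (G : Grp) (D : G -> Prop) n (Hn : forall m, n = Some m -> 2 <= m) :
  nRF_pair G D n -> subgroup D ->
  forall b d, ~ D b -> D d -> d <> gone -> ~ D (b ** d ** ginv b).
Proof.
  intros HRF [D1 [DM DV]] b d Hb Hd Hd1 Hc.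
  apply (proj1 (nRF_relE G D n b) (HRF b Hb) [(true, d); (false, ginv (b ** d ** ginv b))]).
  - discriminate.
  - repeat constructor; simpl; auto.
  - split.
    + split; [intros _; exact Hd1 | exact I].
    + intros p r E. injection E as <- _. intros _ E.
      apply Hd1, (conjg_eq1 b), invg_eq1, E.
  - intro e. apply below_le1; [exact Hn |]. unfold nsign. destruct e; simpl; lia.
  - simpl. rewrite mulg1, !mulgA. apply mulgV.
Qed.

Lemma coeffs_in_image {A B : Type} (h : A -> B) (Q : A -> Prop) (w : list (bool * B)) :
  Forall (fun p => exists a, snd p = h a /\ Q a) w ->
  exists wA, w = map_coeffs h wA /\ Forall (fun p => Q (snd p)) wA.
Proof.
  induction w as [|[e d] w IH]; intro H; [exists []; split; auto |].
  inversion H as [|? ? [a [Ea Qa]] Hw]. destruct (IH Hw) as [wA [-> F]].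
  exists ((e, a) :: wA). simpl in *. subst. split; auto.
Qed.

(* A word with coefficients in [phi (alpha C)] either lives in [phi H], where the n-RF
   property of [(H, alpha C)] applies, or has its base point outside [phi H]. *)
Lemma nRF_pair_comp (G H C : Grp) (phi : H -> G) (alpha : C -> H) n :
  is_hom H G phi -> injective phi ->
  nRF_pair G (image phi) n -> nRF_pair H (image alpha) n ->
  nRF_pair G (image (fun c => phi (alpha c))) n.
Proof.
  intros Hp Ip RG RH x Hx. apply nRF_relE. intros w Hw HD Hc Hb.
  destruct (classic (image phi x)) as [[h ->]|Nx].
  - assert (Nh : ~ image alpha h) by (intros [c ->]; apply Hx; exists c; reflexivity).
    destruct (coeffs_in_image phi (image alpha) w) as [wH [-> FH]].
    { eapply Forall_impl; [| exact HD]. intros [e d] [c Ec]. exists (alpha c).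
      split; [exact Ec | exists c; reflexivity]. }
    rewrite (word_eval_map Hp). intro E.
    rewrite <- (hom1 Hp) in E. apply Ip in E. revert E.
    apply (proj1 (nRF_relE H _ n h) (RH h Nh) wH); auto.
    + intros ->. apply Hw. reflexivity.
    + exact (cyc_reduced_map_coeffs H G phi wH (hom1 Hp) Hc).
    + intro e. rewrite <- (nsign_map_coeffs phi). apply Hb.
  - apply (proj1 (nRF_relE G _ n x) (RG x Nx) w); auto.
    eapply Forall_impl; [| exact HD]. intros p [c ->]. exists (alpha c). reflexivity.
Qed.

(** * Normal forms in an amalgam *)

Section Transversal.
Variables (X C : Grp) (h : C -> X).
Hypothesis h_hom : is_hom C X h.
Hypothesis h_inj : injective h.

Definition is_rep (y r : X) : Prop := (exists c, r = h c ** y) /\ (image h y -> r = gone).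

(* A right transversal of [h C] in [X], with [gone] representing the trivial coset. *)
Definition rep (y : X) : X := epsilon (inhabits gone) (is_rep y).

Lemma rep_spec y : is_rep y (rep y).
Proof.
  unfold rep. apply epsilon_spec. destruct (classic (image h y)) as [[c E]|N].
  - exists gone. split; [| reflexivity]. exists (ginv c).
    rewrite E, (homV h_hom), mulVg. reflexivity.
  - exists y. split; [| contradiction]. exists gone. rewrite (hom1 h_hom), mul1g. reflexivity.
Qed.

Lemma rep_image y : image h y -> rep y = gone.
Proof. apply rep_spec. Qed.

Lemma rep_coset y : exists c, rep y = h c ** y.
Proof. apply rep_spec. Qed.

Lemma rep_mull c y : rep (h c ** y) = rep y.
Proof.
  unfold rep. f_equal. extensionality r. apply propositional_extensionality.
  unfold is_rep. split; intros [[c1 E1] H2]; split.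
  - exists (c1 ** c). rewrite h_hom, <- mulgA. exact E1.
  - intros [c0 E0]. apply H2. exists (c ** c0). rewrite h_hom, E0. reflexivity.
  - exists (c1 ** ginv c). rewrite h_hom, (homV h_hom), mulgA, mulgKV. exact E1.
  - intro I. apply H2, (image_mull h_hom c), I.
Qed.

Lemma rep_idem y : rep (rep y) = rep y.
Proof. destruct (rep_coset y) as [c E]. rewrite E at 1. apply rep_mull. Qed.

Lemma rep_notin y : ~ image h y -> ~ image h (rep y).
Proof.
  intros N I. destruct (rep_coset y) as [c E]. rewrite E in I.
  apply N, (image_mull h_hom c), I.
Qed.

Definition cofactor (y : X) : C := epsilon (inhabits gone) (fun c => y = h c ** rep y).

Lemma cofactor_spec y : y = h (cofactor y) ** rep y.
Proof.
  apply (epsilon_spec (inhabits (@gone C)) (fun c => y = h c ** rep y)).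
  destruct (rep_coset y) as [c E]. exists (ginv c).
  rewrite E, (homV h_hom), mulKg. reflexivity.
Qed.

Lemma cofactor_unique c y : y = h c ** rep y -> cofactor y = c.
Proof. intro E. apply h_inj, (mulg_injr (rep y)). rewrite <- cofactor_spec. exact E. Qed.

End Transversal.

Section AlternatingProducts.
Variables (A B C P : Grp) (f : C -> A) (g : C -> B) (iA : A -> P) (iB : B -> P).

(* [alt_prod st en k y]: [y] is a product of [k] syllables taken alternately from
   [iA (A \ f C)] and [iB (B \ g C)]; [st] and [en] tell whether the first and the last
   syllable come from [A]. *)
Inductive alt_prod : bool -> bool -> nat -> P -> Prop :=
| alt_A a : ~ image f a -> alt_prod true true 1 (iA a)
| alt_B b : ~ image g b -> alt_prod false false 1 (iB b)
| alt_consA a en k y : ~ image f a -> alt_prod false en k y -> alt_prod true en (S k) (iA a ** y)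
| alt_consB b en k y : ~ image g b -> alt_prod true en k y -> alt_prod false en (S k) (iB b ** y).

Lemma alt_prod_pos st en k y : alt_prod st en k y -> 1 <= k.
Proof. induction 1; lia. Qed.

Lemma alt_prod_cat s1 e1 k1 y1 s2 e2 k2 y2 :
  alt_prod s1 e1 k1 y1 -> alt_prod s2 e2 k2 y2 -> e1 = negb s2 ->
  alt_prod s1 e2 (k1 + k2) (y1 ** y2).
Proof.
  intros H1 H2. revert s2 e2 k2 y2 H2.
  induction H1; intros s2 e2 k2 y2 H2 E.
  - destruct s2; [discriminate |]. apply alt_consA; assumption.
  - destruct s2; [| discriminate]. apply alt_consB; assumption.
  - rewrite <- mulgA. apply alt_consA; eauto.
  - rewrite <- mulgA. apply alt_consB; eauto.
Qed.

End AlternatingProducts.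

Arguments alt_A {A B C P f g iA iB}. Arguments alt_B {A B C P f g iA iB}.

Arguments alt_prod_cat {A B C P f g iA iB s1 e1 k1 y1 s2 e2 k2 y2}.

Lemma alt_prod_swap {A B C P f g iA iB st en k y} :
  alt_prod A B C P f g iA iB st en k y -> alt_prod B A C P g f iB iA (negb st) (negb en) k y.
Proof. induction 1; simpl; constructor; auto. Qed.

Lemma alt_prod_swapE {A B C P f g iA iB st en k y} :
  alt_prod B A C P g f iB iA (negb st) (negb en) k y -> alt_prod A B C P f g iA iB st en k y.
Proof. intro H. apply alt_prod_swap in H. rewrite !Bool.negb_involutive in H. exact H. Qed.

Lemma alt_prod_endA {A B C P f g iA iB st k y} : alt_prod A B C P f g iA iB st true k y ->
  (st = true /\ k = 1 /\ exists a, ~ image f a /\ y = iA a) \/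
  exists k' y' a, k = S k' /\ alt_prod A B C P f g iA iB st false k' y' /\
                  ~ image f a /\ y = y' ** iA a.
Proof.
  intro H. remember true as en eqn:Een. induction H; try discriminate.
  - left. eauto.
  - subst en.
    destruct (IHalt_prod eq_refl) as [[E _]|[k' [y' [a' [-> [HR [Na' ->]]]]]]]; [discriminate |].
    right. exists (S k'), (iA a ** y'), a'. rewrite mulgA. repeat split; auto. constructor; auto.
  - subst en. right.
    destruct (IHalt_prod eq_refl) as [[_ [-> [a' [Na' ->]]]]|[k' [y' [a' [-> [HR [Na' ->]]]]]]].
    + exists 1, (iB b), a'. repeat split; auto. constructor; auto.
    + exists (S k'), (iB b ** y'), a'. rewrite mulgA. repeat split; auto. constructor; auto.
Qed.

Lemma alt_prod_endB {A B C P f g iA iB st k y} : alt_prod A B C P f g iA iB st false k y ->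
  (st = false /\ k = 1 /\ exists b, ~ image g b /\ y = iB b) \/
  exists k' y' b, k = S k' /\ alt_prod A B C P f g iA iB st true k' y' /\
                  ~ image g b /\ y = y' ** iB b.
Proof.
  intro H. apply alt_prod_swap, alt_prod_endA in H.
  destruct H as [[E1 E2]|[k' [y' [b [E1 [E2 E3]]]]]].
  - left. destruct st; [discriminate | auto].
  - right. exists k', y', b. split; [exact E1 | split; [apply alt_prod_swapE, E2 | exact E3]].
Qed.

Lemma sig_ext {T : Type} {Q : T -> Prop} (x y : {t | Q t}) : proj1_sig x = proj1_sig y -> x = y.
Proof. destruct x as [x qx], y as [y qy]; simpl. intros ->. f_equal. apply proof_irrelevance. Qed.

Record bij (T : Type) := Bij {
  bij_fun : T -> T;
  bij_inv : T -> T;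
  bij_funK : forall x, bij_fun (bij_inv x) = x;
  bij_invK : forall x, bij_inv (bij_fun x) = x }.
Arguments bij_fun {T}. Arguments bij_inv {T}.

Lemma bij_ext T (p q : bij T) : (forall x, bij_fun p x = bij_fun q x) -> p = q.
Proof.
  destruct p as [f1 b1 fb1 bf1], q as [f2 b2 fb2 bf2]; simpl. intro E.
  assert (f1 = f2) by (extensionality x; apply E). subst f2.
  assert (b1 = b2) by (extensionality x; rewrite <- (fb2 x) at 1; apply bf1). subst b2.
  f_equal; apply proof_irrelevance.
Qed.

Definition bij_comp T (p q : bij T) : bij T.
Proof.
  refine (Bij T (fun x => bij_fun p (bij_fun q x)) (fun x => bij_inv q (bij_inv p x)) _ _);
    intro x; [rewrite !bij_funK | rewrite !bij_invK]; reflexivity.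
Defined.

Definition bij_id T : bij T :=
  Bij T (fun x => x) (fun x => x) (fun _ => eq_refl) (fun _ => eq_refl).

Definition bij_rev T (p : bij T) : bij T :=
  Bij T (bij_inv p) (bij_fun p) (bij_invK T p) (bij_funK T p).

Definition Sym (T : Type) : Grp.
Proof.
  refine {| gcar := bij T; gmul := bij_comp T; gone := bij_id T; ginv := bij_rev T |};
    intros; apply bij_ext; intros; simpl; [reflexivity | reflexivity | apply bij_invK].
Defined.

(* Van der Waerden's argument: [A] and [B] act on normal forms [(c, [t1; ...; tm])],
   standing for [f c * t1 * ... * tm] with the [ti] alternating transversal
   representatives outside [C]; the universal property turns these actions into a
   representation of [P] that detects alternating products. *)
Section NormalForm.
Variables (A B C P : Grp) (f : C -> A) (g : C -> B) (iA : A -> P) (iB : B -> P).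
Hypotheses (f_hom : is_hom C A f) (g_hom : is_hom C B g).
Hypotheses (f_inj : injective f) (g_inj : injective g).
Hypothesis amalgam : is_amalgam C A B P f g iA iB.

Definition nf_syllable (t : A + B) : Prop :=
  match t with
  | inl a => rep A C f a = a /\ ~ image f a
  | inr b => rep B C g b = b /\ ~ image g b
  end.

Definition is_inl (t : A + B) : bool := match t with inl _ => true | inr _ => false end.

Fixpoint alternating (ts : list (A + B)) : Prop :=
  match ts with
  | t :: (t' :: _) as r => is_inl t <> is_inl t' /\ alternating r
  | _ => True
  end.

Definition nf_valid (ts : list (A + B)) : Prop := alternating ts /\ Forall nf_syllable ts.

Definition nf := { p : C * list (A + B) | nf_valid (snd p) }.

Definition no_headA (r : list (A + B)) : Prop := match r with inl _ :: _ => False | _ => True end.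
Definition no_headB (r : list (A + B)) : Prop := match r with inr _ :: _ => False | _ => True end.

Definition headA (ts : list (A + B)) : A * list (A + B) :=
  match ts with inl t :: r => (t, r) | _ => (gone, ts) end.
Definition headB (ts : list (A + B)) : B * list (A + B) :=
  match ts with inr t :: r => (t, r) | _ => (gone, ts) end.

Definition consA (y : A) (r : list (A + B)) : C * list (A + B) :=
  (cofactor A C f y,
   if excluded_middle_informative (image f y) then r else inl (rep A C f y) :: r).
Definition consB (y : B) (r : list (A + B)) : C * list (A + B) :=
  (cofactor B C g y,
   if excluded_middle_informative (image g y) then r else inr (rep B C g y) :: r).

Definition actA (a : A) (p : C * list (A + B)) : C * list (A + B) :=
  consA (a ** f (fst p) ** fst (headA (snd p))) (snd (headA (snd p))).
Definition actB (b : B) (p : C * list (A + B)) : C * list (A + B) :=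
  consB (b ** g (fst p) ** fst (headB (snd p))) (snd (headB (snd p))).

Lemma headA_valid ts : nf_valid ts ->
  no_headA (snd (headA ts)) /\ nf_valid (snd (headA ts)) /\
  (forall t r, ts = inl t :: r -> nf_syllable (inl t)).
Proof.
  intros [Al Fo]. destruct ts as [|[a|b] r]; simpl.
  - split; [exact I | split; [split; auto | discriminate]].
  - inversion Fo; subst. destruct r as [|[a'|b'] r']; simpl in Al.
    + split; [exact I | split; [split; auto |]]. intros t r E. injection E as <- <-. assumption.
    + destruct Al as [Ne _]. congruence.
    + split; [exact I | split; [split; tauto |]]. intros t r E. injection E as <- <-. assumption.
  - split; [exact I | split; [split; auto | discriminate]].
Qed.

Lemma headB_valid ts : nf_valid ts ->
  no_headB (snd (headB ts)) /\ nf_valid (snd (headB ts)) /\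
  (forall t r, ts = inr t :: r -> nf_syllable (inr t)).
Proof.
  intros [Al Fo]. destruct ts as [|[a|b] r]; simpl.
  - split; [exact I | split; [split; auto | discriminate]].
  - split; [exact I | split; [split; auto | discriminate]].
  - inversion Fo; subst. destruct r as [|[a'|b'] r']; simpl in Al.
    + split; [exact I | split; [split; auto |]]. intros t r E. injection E as <- <-. assumption.
    + split; [exact I | split; [split; tauto |]]. intros t r E. injection E as <- <-. assumption.
    + destruct Al as [Ne _]. congruence.
Qed.

Lemma consA_valid y r : no_headA r -> nf_valid r -> nf_valid (snd (consA y r)).
Proof.
  intros N [Al Fo]. unfold consA. simpl.
  destruct (excluded_middle_informative (image f y)) as [I|NI]; [split; auto |].
  split.
  - destruct r as [|[a|b] r']; simpl in *;
      [auto | contradiction | split; [discriminate | exact Al]].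
  - constructor; [split; [apply rep_idem | apply rep_notin] |]; auto.
Qed.

Lemma consB_valid y r : no_headB r -> nf_valid r -> nf_valid (snd (consB y r)).
Proof.
  intros N [Al Fo]. unfold consB. simpl.
  destruct (excluded_middle_informative (image g y)) as [I|NI]; [split; auto |].
  split.
  - destruct r as [|[a|b] r']; simpl in *;
      [auto | split; [discriminate | exact Al] | contradiction].
  - constructor; [split; [apply rep_idem | apply rep_notin] |]; auto.
Qed.

Lemma actA_valid a p : nf_valid (snd p) -> nf_valid (snd (actA a p)).
Proof. intro V. destruct (headA_valid _ V) as [N [V2 _]]. apply consA_valid; auto. Qed.

Lemma actB_valid b p : nf_valid (snd p) -> nf_valid (snd (actB b p)).
Proof. intro V. destruct (headB_valid _ V) as [N [V2 _]]. apply consB_valid; auto. Qed.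

Lemma headA_consA y r : no_headA r ->
  headA (snd (consA y r)) = (rep A C f y, r) /\ fst (consA y r) = cofactor A C f y.
Proof.
  intro N. unfold consA; simpl. split; [| reflexivity].
  destruct (excluded_middle_informative (image f y)) as [I|NI]; [| reflexivity].
  rewrite rep_image by auto. destruct r as [|[]]; [reflexivity | contradiction | reflexivity].
Qed.

Lemma headB_consB y r : no_headB r ->
  headB (snd (consB y r)) = (rep B C g y, r) /\ fst (consB y r) = cofactor B C g y.
Proof.
  intro N. unfold consB; simpl. split; [| reflexivity].
  destruct (excluded_middle_informative (image g y)) as [I|NI]; [| reflexivity].
  rewrite rep_image by auto. destruct r as [|[]]; [reflexivity | reflexivity | contradiction].
Qed.

Lemma actA_mul a1 a2 p : nf_valid (snd p) -> actA a1 (actA a2 p) = actA (a1 ** a2) p.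
Proof.
  intro V. destruct (headA_valid _ V) as [N _].
  destruct (headA_consA (a2 ** f (fst p) ** fst (headA (snd p))) _ N) as [E1 E2].
  unfold actA at 1 2. rewrite E1, E2. unfold actA. simpl. f_equal.
  rewrite <- mulgA, <- (cofactor_spec A C f f_hom), !mulgA. reflexivity.
Qed.

Lemma actB_mul b1 b2 p : nf_valid (snd p) -> actB b1 (actB b2 p) = actB (b1 ** b2) p.
Proof.
  intro V. destruct (headB_valid _ V) as [N _].
  destruct (headB_consB (b2 ** g (fst p) ** fst (headB (snd p))) _ N) as [E1 E2].
  unfold actB at 1 2. rewrite E1, E2. unfold actB. simpl. f_equal.
  rewrite <- mulgA, <- (cofactor_spec B C g g_hom), !mulgA. reflexivity.
Qed.

Lemma actA_C c0 p : nf_valid (snd p) -> actA (f c0) p = (c0 ** fst p, snd p).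
Proof.
  intro V. destruct (headA_valid _ V) as [_ [_ Ok]]. destruct p as [c ts].
  unfold actA, consA. simpl in *. rewrite <- f_hom.
  destruct ts as [|[t|t] r]; simpl; rewrite ?mulg1.
  2: destruct (Ok t r eq_refl) as [Rt Nt].
  all: destruct (excluded_middle_informative _) as [I|NI].
  - f_equal. apply cofactor_unique; auto. rewrite rep_image, mulg1; auto.
  - exfalso. apply NI. eexists; reflexivity.
  - exfalso. apply Nt, (image_mull f_hom (c0 ** c)), I.
  - rewrite rep_mull, Rt by auto. f_equal. apply cofactor_unique; auto. rewrite rep_mull, Rt; auto.
  - f_equal. apply cofactor_unique; auto. rewrite rep_image, mulg1; auto.
  - exfalso. apply NI. eexists; reflexivity.
Qed.

Lemma actB_C c0 p : nf_valid (snd p) -> actB (g c0) p = (c0 ** fst p, snd p).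
Proof.
  intro V. destruct (headB_valid _ V) as [_ [_ Ok]]. destruct p as [c ts].
  unfold actB, consB. simpl in *. rewrite <- g_hom.
  destruct ts as [|[t|t] r]; simpl; rewrite ?mulg1.
  3: destruct (Ok t r eq_refl) as [Rt Nt].
  all: destruct (excluded_middle_informative _) as [I|NI].
  - f_equal. apply cofactor_unique; auto. rewrite rep_image, mulg1; auto.
  - exfalso. apply NI. eexists; reflexivity.
  - f_equal. apply cofactor_unique; auto. rewrite rep_image, mulg1; auto.
  - exfalso. apply NI. eexists; reflexivity.
  - exfalso. apply Nt, (image_mull g_hom (c0 ** c)), I.
  - rewrite rep_mull, Rt by auto. f_equal. apply cofactor_unique; auto. rewrite rep_mull, Rt; auto.
Qed.

Lemma actA_one p : nf_valid (snd p) -> actA gone p = p.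
Proof. intro V. rewrite <- (hom1 f_hom), actA_C, mul1g by exact V. destruct p; reflexivity. Qed.

Lemma actB_one p : nf_valid (snd p) -> actB gone p = p.
Proof. intro V. rewrite <- (hom1 g_hom), actB_C, mul1g by exact V. destruct p; reflexivity. Qed.

Definition liftA (a : A) (w : nf) : nf :=
  exist _ (actA a (proj1_sig w)) (actA_valid a _ (proj2_sig w)).
Definition liftB (b : B) (w : nf) : nf :=
  exist _ (actB b (proj1_sig w)) (actB_valid b _ (proj2_sig w)).

Definition permA (a : A) : Sym nf.
Proof.
  refine (Bij nf (liftA a) (liftA (ginv a)) _ _); intro w; apply sig_ext; simpl;
    rewrite actA_mul by (apply proj2_sig || apply actA_valid, proj2_sig);
    [rewrite mulgV | rewrite mulVg]; apply actA_one, proj2_sig.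
Defined.

Definition permB (b : B) : Sym nf.
Proof.
  refine (Bij nf (liftB b) (liftB (ginv b)) _ _); intro w; apply sig_ext; simpl;
    rewrite actB_mul by (apply proj2_sig || apply actB_valid, proj2_sig);
    [rewrite mulgV | rewrite mulVg]; apply actB_one, proj2_sig.
Defined.

Lemma permA_hom : is_hom A (Sym nf) permA.
Proof.
  intros x y. apply bij_ext. intro w. apply sig_ext. simpl.
  rewrite actA_mul; [reflexivity | apply proj2_sig].
Qed.

Lemma permB_hom : is_hom B (Sym nf) permB.
Proof.
  intros x y. apply bij_ext. intro w. apply sig_ext. simpl.
  rewrite actB_mul; [reflexivity | apply proj2_sig].
Qed.

Lemma permA_permB c : permA (f c) = permB (g c).
Proof.
  apply bij_ext. intro w. apply sig_ext. simpl.
  rewrite actA_C, actB_C; [reflexivity | apply proj2_sig ..].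
Qed.

Lemma nf_representation : exists h : P -> Sym nf,
  is_hom P (Sym nf) h /\ (forall a, h (iA a) = permA a) /\ (forall b, h (iB b) = permB b).
Proof.
  destruct amalgam as [_ [_ [_ U]]]. apply (U (Sym nf) permA permB permA_hom permB_hom permA_permB).
Qed.

Definition nf0 : nf := exist (fun p => nf_valid (snd p)) (gone, []) (conj I (Forall_nil _)).

Lemma alt_prod_nf (h : P -> Sym nf) {st en k y} :
  is_hom P (Sym nf) h -> (forall a, h (iA a) = permA a) -> (forall b, h (iB b) = permB b) ->
  alt_prod A B C P f g iA iB st en k y ->
  length (snd (proj1_sig (bij_fun (h y) nf0))) = k /\
  option_map is_inl (hd_error (snd (proj1_sig (bij_fun (h y) nf0)))) = Some st.
Proof.
  intros Hh HA HB HR.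
  induction HR as [a Na|b Nb|a en k y Na HR IH|b en k y Nb HR IH];
    rewrite ?Hh, ?HA, ?HB; simpl.
  - unfold actA, consA. simpl. rewrite (hom1 f_hom), !mulg1.
    destruct (excluded_middle_informative _); [contradiction | auto].
  - unfold actB, consB. simpl. rewrite (hom1 g_hom), !mulg1.
    destruct (excluded_middle_informative _); [contradiction | auto].
  - destruct (bij_fun (h y) nf0) as [[c [|[t|t] r]] V]; simpl in *; destruct IH as [L Hs];
      try discriminate.
    unfold actA, consA. simpl. rewrite mulg1.
    destruct (excluded_middle_informative _) as [I|NI]; [| simpl; auto].
    exfalso. apply Na, (image_mulr f_hom a c), I.
  - destruct (bij_fun (h y) nf0) as [[c [|[t|t] r]] V]; simpl in *; destruct IH as [L Hs];
      try discriminate.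
    unfold actB, consB. simpl. rewrite mulg1.
    destruct (excluded_middle_informative _) as [I|NI]; [| simpl; auto].
    exfalso. apply Nb, (image_mulr g_hom b c), I.
Qed.

Theorem alt_prod_neq1 st en k y : alt_prod A B C P f g iA iB st en k y -> y <> gone.
Proof.
  intros HR ->. destruct nf_representation as [h [Hh [HA HB]]].
  destruct (alt_prod_nf h Hh HA HB HR) as [L _].
  apply alt_prod_pos in HR. rewrite (hom1 Hh) in L. simpl in L. lia.
Qed.

Theorem amalgam_inj_left : injective iA.
Proof.
  intros a1 a2 E. destruct nf_representation as [h [Hh [HA HB]]].
  apply (f_equal (fun y => proj1_sig (bij_fun (h y) nf0))) in E. rewrite !HA in E.
  simpl in E. unfold actA, consA in E. simpl in E. rewrite (hom1 f_hom), !mulg1 in E.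
  injection E as Ec El.
  rewrite (cofactor_spec A C f f_hom a1), (cofactor_spec A C f f_hom a2), Ec.
  destruct (excluded_middle_informative (image f a1)), (excluded_middle_informative (image f a2));
    try discriminate.
  - rewrite !rep_image; auto.
  - injection El as ->. reflexivity.
Qed.

End NormalForm.

(** * Decomposition of the elements of an amalgam *)

Section AmalgamMaps.
Context {C A B P : Grp} {f : C -> A} {g : C -> B} {iA : A -> P} {iB : B -> P}.
Hypothesis amalgam : is_amalgam C A B P f g iA iB.

Lemma amalgam_homA : is_hom A P iA.
Proof. apply amalgam. Qed.

Lemma amalgam_homB : is_hom B P iB.
Proof. apply amalgam. Qed.

Lemma amalgam_comm c : iA (f c) = iB (g c).
Proof. apply amalgam. Qed.

End AmalgamMaps.

Lemma amalgam_swap {C A B P f g iA iB} :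
  is_amalgam C A B P f g iA iB -> is_amalgam C B A P g f iB iA.
Proof.
  intros [HA [HB [Hc U]]]. split; [exact HB | split; [exact HA | split]].
  - intro c. symmetry. apply Hc.
  - intros K hB hA HhB HhA Hc'.
    destruct (U K hA hB HhA HhB (fun c => eq_sym (Hc' c))) as [[h [Hh [E1 E2]]] Un].
    split; [exists h; auto |].
    intros h1 h2 H1 F1 G1 H2 F2 G2. apply (Un h1 h2); auto.
Qed.

Definition subgroup_grp (G : Grp) (Q : G -> Prop) (HQ : subgroup Q) : Grp.
Proof.
  refine {| gcar := {x | Q x};
            gmul := fun x y => exist _ (proj1_sig x ** proj1_sig y)
                                 (proj1 (proj2 HQ) _ _ (proj2_sig x) (proj2_sig y));
            gone := exist _ gone (proj1 HQ);
            ginv := fun x => exist _ (ginv (proj1_sig x)) (proj2 (proj2 HQ) _ (proj2_sig x)) |};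
    intros; apply sig_ext; simpl; [apply mulgA | apply mul1g | apply mulVg].
Defined.

Section Generation.
Variables (A B C P : Grp) (f : C -> A) (g : C -> B) (iA : A -> P) (iB : B -> P).
Hypothesis g_hom : is_hom C B g.
Hypothesis amalgam : is_amalgam C A B P f g iA iB.

Let iA_hom := amalgam_homA amalgam.
Let iB_hom := amalgam_homB amalgam.
Let iAiB := amalgam_comm amalgam.

(* The inclusion of the subgroup [Q] and the identity are both extensions of [iA], [iB]. *)
Lemma amalgam_generated (Q : P -> Prop) (HQ : subgroup Q) :
  (forall a, Q (iA a)) -> (forall b, Q (iB b)) -> forall y, Q y.
Proof.
  intros QA QB y. pose proof amalgam as [_ [_ [_ U]]].
  set (S := subgroup_grp P Q HQ).
  set (jA := fun a => exist Q (iA a) (QA a) : S).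
  set (jB := fun b => exist Q (iB b) (QB b) : S).
  assert (jA_hom : is_hom A S jA) by (intros a1 a2; apply sig_ext, iA_hom).
  assert (jB_hom : is_hom B S jB) by (intros b1 b2; apply sig_ext, iB_hom).
  assert (Hj : forall c, jA (f c) = jB (g c)) by (intro c; apply sig_ext, iAiB).
  destruct (U S jA jB jA_hom jB_hom Hj) as [[h [Hh [E1 E2]]] _].
  destruct (U P iA iB iA_hom iB_hom iAiB) as [_ Uniq].
  replace y with (proj1_sig (h y)); [apply proj2_sig |].
  apply (Uniq (fun y => proj1_sig (h y)) (fun y => y)); try reflexivity.
  - intros y1 y2. rewrite Hh. reflexivity.
  - intro a. rewrite E1. reflexivity.
  - intro b. rewrite E2. reflexivity.
  - intros y1 y2. reflexivity.
Qed.

Definition left_normal (y : P) : Prop :=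
  (exists a, y = iA a) \/
  exists a0 en k y', alt_prod A B C P f g iA iB false en k y' /\ y = iA a0 ** y'.

Lemma left_normal_mulA a y : left_normal y -> left_normal (iA a ** y).
Proof.
  intros [[a' ->]|[a0 [en [k [y' [HR ->]]]]]].
  - left. exists (a ** a'). symmetry. apply iA_hom.
  - right. exists (a ** a0), en, k, y'. rewrite iA_hom, mulgA. auto.
Qed.

Lemma left_normal_altA en k y : alt_prod A B C P f g iA iB true en k y -> left_normal y.
Proof. inversion 1; [left | right]; eauto 6. Qed.

Lemma left_normal_altB en k y : alt_prod A B C P f g iA iB false en k y -> left_normal y.
Proof. intro HR. right. exists gone, en, k, y. rewrite (hom1 iA_hom), mul1g. auto. Qed.

Lemma left_normal_mulB_altB b en k y :
  alt_prod A B C P f g iA iB false en k y -> left_normal (iB b ** y).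
Proof.
  inversion 1 as [| b1 Nb1 | | b1 en' k' y2 Nb1 HR2]; subst;
    destruct (classic (image g (b ** b1))) as [[c E]|N].
  - left. exists (f c). rewrite iAiB, <- E. symmetry. apply iB_hom.
  - apply (left_normal_altB false 1). rewrite <- iB_hom. constructor. exact N.
  - rewrite mulgA, <- iB_hom, E, <- iAiB. apply left_normal_mulA, (left_normal_altA en k' y2 HR2).
  - apply (left_normal_altB en (S k')). rewrite mulgA, <- iB_hom. constructor; assumption.
Qed.

Lemma left_normal_mulB b y : left_normal y -> left_normal (iB b ** y).
Proof.
  intro HL. destruct (classic (image g b)) as [[c ->]|Nb].
  { rewrite <- iAiB. apply left_normal_mulA, HL. }
  destruct HL as [[a' ->]|[a0 [en [k [y' [HR ->]]]]]];
    [destruct (classic (image f a')) as [[c ->]|Na] |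
     destruct (classic (image f a0)) as [[c ->]|Na]].
  - apply (left_normal_altB false 1). rewrite iAiB, <- iB_hom. constructor.
    intro I. apply Nb, (image_mulr g_hom b c), I.
  - apply (left_normal_altB true 2). repeat constructor; assumption.
  - rewrite mulgA, iAiB, <- iB_hom. apply (left_normal_mulB_altB _ en k y' HR).
  - apply (left_normal_altB en (S (S k))). repeat constructor; assumption.
Qed.

Lemma left_normal_all y : left_normal y.
Proof.
  pose (Q x := forall z, left_normal z -> left_normal (x ** z) /\ left_normal (ginv x ** z)).
  assert (HQ : forall x, Q x).
  { apply amalgam_generated; unfold Q.
    - split; [| split].
      + intros z Hz. rewrite invg1, mul1g. auto.
      + intros x1 x2 H1 H2 z Hz. rewrite invgM, <- !mulgA.
        split; [apply H1, H2 | apply H2, H1]; exact Hz.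
      + intros x Hx z Hz. rewrite invgK. split; apply Hx; exact Hz.
    - intros a z Hz. rewrite <- (homV iA_hom). split; apply left_normal_mulA, Hz.
    - intros b z Hz. rewrite <- (homV iB_hom). split; apply left_normal_mulB, Hz. }
  rewrite <- (mulg1 y). apply HQ. left. exists gone. symmetry. apply (hom1 iA_hom).
Qed.

Theorem amalgam_decomp x : ~ image iA x ->
  exists a0 a1 k x0, alt_prod A B C P f g iA iB false false k x0 /\ x = iA a0 ** x0 ** iA a1.
Proof.
  intro Nx. destruct (left_normal_all x) as [[a Ea]|[a0 [[] [k [y' [HR ->]]]]]].
  - exfalso. apply Nx. exists a. exact Ea.
  - destruct (alt_prod_endA HR) as [[E _]|[k' [y'' [a [_ [HR' [_ ->]]]]]]];
      [discriminate |].
    exists a0, a, k', y''. rewrite mulgA. auto.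
  - exists a0, gone, k, y'. rewrite (hom1 iA_hom), mulg1. auto.
Qed.

End Generation.

(** * Words with coefficients in the amalgamated subgroup *)

Record nRF_amalgam (A B C P : Grp) (f : C -> A) (g : C -> B) (iA : A -> P) (iB : B -> P)
    (n : option nat) : Prop := {
  am_f_hom : is_hom C A f;
  am_g_hom : is_hom C B g;
  am_f_inj : injective f;
  am_g_inj : injective g;
  am_universal : is_amalgam C A B P f g iA iB;
  am_nRF_A : nRF_pair A (image f) n;
  am_nRF_B : nRF_pair B (image g) n }.

Arguments am_f_hom {A B C P f g iA iB n}. Arguments am_g_hom {A B C P f g iA iB n}.
Arguments am_f_inj {A B C P f g iA iB n}. Arguments am_g_inj {A B C P f g iA iB n}.
Arguments am_universal {A B C P f g iA iB n}.
Arguments am_nRF_A {A B C P f g iA iB n}. Arguments am_nRF_B {A B C P f g iA iB n}.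

Lemma nRF_amalgam_swap {A B C P f g iA iB n} :
  nRF_amalgam A B C P f g iA iB n -> nRF_amalgam B A C P g f iB iA n.
Proof. intros []. constructor; auto. apply amalgam_swap; assumption. Qed.

Lemma reduced_same_sign {G : Grp} e (w : list (bool * G)) :
  Forall (fun p => fst p = e) w -> reduced w.
Proof.
  induction 1 as [|p [|q w] Hp Hw IH]; simpl; auto.
  inversion Hw as [|? ? Hq]. split; [| exact IH].
  intro E. rewrite Hp, Hq in E. destruct e; discriminate.
Qed.

Lemma bounded_same_sign {G : Grp} n (Hn : forall m, n = Some m -> 2 <= m) e
    (wr w : list (bool * G)) :
  Forall (fun p => fst p = e) wr -> length wr <= nsign e w -> bounded n w -> bounded n wr.
Proof.
  intros F L Hb e'.
  assert (E : nsign e' wr = if Bool.eqb e' e then length wr else 0).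
  { clear L. induction F as [|[e0 d] wr Hp F IH]; [destruct (Bool.eqb e' e); reflexivity |].
    simpl in Hp. subst e0. rewrite nsign_cons, IH. simpl. destruct (Bool.eqb e' e); reflexivity. }
  rewrite E. destruct (Bool.eqb e' e) eqn:Ee.
  - apply Bool.eqb_prop in Ee. subst e'. exact (below_le _ _ _ (Hb e) L).
  - apply below_le1; [exact Hn | lia].
Qed.

Section WordsInBB.
Variables (A B C P : Grp) (f : C -> A) (g : C -> B) (iA : A -> P) (iB : B -> P) (n : option nat).
Hypothesis Hn : forall m, n = Some m -> 2 <= m.
Hypothesis HA : nRF_amalgam A B C P f g iA iB n.

Let g_hom := am_g_hom HA.
Let iA_hom := amalgam_homA (am_universal HA).
Let iB_hom := amalgam_homB (am_universal HA).
Let iAiB := amalgam_comm (am_universal HA).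

Notation alt := (alt_prod A B C P f g iA iB).
Notation inC := (image (fun c => iA (f c))).

Variables (b1 bl : B) (x' : P).
Hypotheses (Nb1 : ~ image g b1) (Nbl : ~ image g bl).
Hypothesis IHx : forall w, w <> [] -> coeffs_in inC w -> reduced w -> bounded n w ->
  exists k, alt true true k (word_eval x' w).

Let x := iB b1 ** x' ** iB bl.

Let head_syl (e : bool) := if e then b1 else ginv bl.
Let tail_syl (e : bool) := if e then bl else ginv b1.

Let altAA (z : P) := exists k, alt true true k z.
Let altBB (z : P) := exists k, alt false false k z.

Lemma altBB_sandwich b z T : ~ image g b -> altAA z -> altBB T -> altBB (iB b ** z ** T).
Proof.
  intros Nb [k1 R1] [k2 R2]. rewrite <- mulgA. eexists.
  apply alt_consB; [exact Nb |]. exact (alt_prod_cat R1 R2 eq_refl).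
Qed.

Lemma gpow_x e : gpow e x = iB (head_syl e) ** gpow e x' ** iB (tail_syl e).
Proof.
  destruct e; simpl; unfold x; [reflexivity |].
  rewrite !invgM, !(homV iB_hom), !mulgA. reflexivity.
Qed.

Lemma head_syl_notin e : ~ image g (head_syl e).
Proof. destruct e; simpl; [| intro I; apply Nbl, (image_inv g_hom), I]; assumption. Qed.

Lemma tail_syl_notin e : ~ image g (tail_syl e).
Proof. destruct e; simpl; [| intro I; apply Nb1, (image_inv g_hom), I]; assumption. Qed.

Lemma same_sign_block_altAA e (wr w : list (bool * P)) :
  wr <> [] -> Forall (fun p => fst p = e /\ inC (snd p)) wr ->
  length wr <= nsign e w -> bounded n w -> altAA (word_eval x' wr).
Proof.
  intros Hne F L Hb. apply IHx; [exact Hne | | |].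
  - eapply Forall_impl; [| exact F]. intros p [_ H]. exact H.
  - apply (reduced_same_sign e). eapply Forall_impl; [| exact F]. intros p [H _]. exact H.
  - apply (bounded_same_sign n Hn e wr w); [| exact L | exact Hb].
    eapply Forall_impl; [| exact F]. intros p [H _]. exact H.
Qed.

(* A junction [tail_syl e * g c * head_syl e'] can only fall into [g C] when the signs
   agree: otherwise it is a conjugate [bl g c bl^-1] or [b1^-1 g c b1] with [g c <> 1]. *)
Lemma junction_same_sign e e' c c' :
  no_cancel (e, iA (f c)) (e', gone) -> tail_syl e ** g c ** head_syl e' = g c' -> e = e'.
Proof.
  intros J E. destruct (Bool.bool_dec e e') as [| Ne]; [assumption | exfalso].
  assert (Hgc : g c <> gone).
  { intro E0. apply J; [destruct e, e'; simpl in *; congruence |].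
    simpl. rewrite iAiB, E0. apply (hom1 iB_hom). }
  assert (RFB := am_nRF_B HA).
  assert (SB := image_subgroup C B g g_hom).
  destruct e, e'; try congruence; simpl in E.
  - apply (nRF_conj_notin B (image g) n Hn RFB SB bl (g c) Nbl); [exists c | | exists c']; auto.
  - apply (nRF_conj_notin B (image g) n Hn RFB SB (ginv b1) (g c)); [| exists c | | exists c'];
      auto; [intro I; apply Nb1, (image_inv g_hom), I | rewrite invgK; exact E].
Qed.

(* Reading [word_eval x w] from the right: the leading block of letters of the sign [e1]
   of the first letter merges into a single [x']-word, the rest is a [B...B] product. *)
Let step_invariant (w : list (bool * P)) : Prop :=
  exists e1 wr T, fst (hd (true, gone) w) = e1 /\ wr <> [] /\
    Forall (fun p => fst p = e1 /\ inC (snd p)) wr /\ length wr <= nsign e1 w /\ altBB T /\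
    word_eval x w = iB (head_syl e1) ** word_eval x' wr ** T.

Lemma inC_one : inC gone.
Proof. exists gone. rewrite (hom1 (am_f_hom HA)), (hom1 iA_hom). reflexivity. Qed.

Lemma step_invariant_single e c : step_invariant [(e, iA (f c))].
Proof.
  exists e, [(e, gone)], (iB (tail_syl e ** g c)). split; [reflexivity |]. split; [discriminate |].
  split; [repeat constructor; apply inC_one |].
  split; [rewrite nsign_cons, Bool.eqb_reflx; simpl; lia |].
  split.
  - exists 1. apply alt_B. intro I. apply (tail_syl_notin e), (image_mulr g_hom _ c), I.
  - simpl. rewrite gpow_x, iAiB, iB_hom, !mulg1, !mulgA. reflexivity.
Qed.

Lemma step_invariant_all w :
  w <> [] -> coeffs_in inC w -> reduced w -> bounded n w -> step_invariant w.
Proof.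
  induction w as [|[e d] r IH]; intros Hne F Hr Hb; [congruence |].
  inversion F as [|? ? [c Ed] Fr]. simpl in Ed. subst d.
  destruct r as [|[e' d'] r']; [apply step_invariant_single |].
  destruct Hr as [J Hr].
  assert (Hb' : bounded n ((e', d') :: r')).
  { refine (bounded_le n _ _ _ Hb). intro e0. rewrite (nsign_cons _ _ ((e', d') :: r')). lia. }
  destruct (IH ltac:(discriminate) Fr Hr Hb') as [e1 [wr [T [He1 [Hwr [Fwr [Lwr [HT Ev]]]]]]]].
  simpl in He1. subst e1.
  assert (Ecomp : word_eval x ((e, iA (f c)) :: (e', d') :: r') =
                  iB (head_syl e) ** gpow e x' ** iB (tail_syl e ** g c ** head_syl e') **
                  word_eval x' wr ** T).
  { change (word_eval x ((e, iA (f c)) :: (e', d') :: r'))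
      with (gpow e x ** iA (f c) ** word_eval x ((e', d') :: r')).
    rewrite Ev, gpow_x, iAiB, !iB_hom, !mulgA. reflexivity. }
  destruct (classic (image g (tail_syl e ** g c ** head_syl e'))) as [[c' Ec']|Ngood].
  - assert (Ee : e = e') by exact (junction_same_sign e e' c c' J Ec'). subst e'.
    exists e, ((e, iA (f c')) :: wr), T. split; [reflexivity |]. split; [discriminate |].
    split; [constructor; [split; [reflexivity | exists c'; reflexivity] | exact Fwr] |].
    split; [rewrite nsign_cons, Bool.eqb_reflx; simpl; lia |].
    split; [exact HT |].
    rewrite Ecomp, Ec', <- iAiB. simpl. rewrite !mulgA. reflexivity.
  - exists e, [(e, gone)], (iB (tail_syl e ** g c ** head_syl e') ** word_eval x' wr ** T).
    split; [reflexivity |]. split; [discriminate |].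
    split; [repeat constructor; apply inC_one |].
    split; [rewrite nsign_cons, Bool.eqb_reflx; simpl; lia |].
    split; [apply altBB_sandwich; [exact Ngood | | exact HT] |].
    + apply (same_sign_block_altAA e' wr ((e', d') :: r')); assumption.
    + rewrite Ecomp. simpl. rewrite !mulg1, !mulgA. reflexivity.
Qed.

Theorem word_eval_altBB_step w :
  w <> [] -> coeffs_in inC w -> reduced w -> bounded n w ->
  exists k, alt false false k (word_eval x w).
Proof.
  intros Hne F Hr Hb.
  destruct (step_invariant_all w Hne F Hr Hb) as [e1 [wr [T [_ [Hwr [Fwr [Lwr [HT ->]]]]]]]].
  apply altBB_sandwich; [apply head_syl_notin | | exact HT].
  exact (same_sign_block_altAA e1 wr w Hwr Fwr Lwr Hb).
Qed.

End WordsInBB.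

Lemma inC_swap (A B C P : Grp) (f : C -> A) (g : C -> B) (iA : A -> P) (iB : B -> P) :
  (forall c, iA (f c) = iB (g c)) ->
  forall d, image (fun c => iA (f c)) d -> image (fun c => iB (g c)) d.
Proof. intros Hc d [c ->]. exists c. apply Hc. Qed.

Lemma word_eval_syllableB {A B C P f g iA iB n} (HA : nRF_amalgam A B C P f g iA iB n) b w :
  ~ image g b -> w <> [] -> coeffs_in (image (fun c => iA (f c))) w -> reduced w -> bounded n w ->
  alt_prod A B C P f g iA iB false false 1 (word_eval (iB b) w).
Proof.
  intros Nb Hne F Hr Hb. destruct HA as [_ g_hom _ _ Ham _ RFB].
  pose proof (amalgam_homB Ham) as iB_hom.
  destruct (coeffs_in_image iB (image g) w) as [wB [-> FB]].
  { eapply Forall_impl; [| exact F]. intros [e d] [c Ec]. exists (g c).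
    split; [rewrite Ec; apply (amalgam_comm Ham) | exists c; reflexivity]. }
  rewrite (word_eval_map iB_hom). apply alt_B.
  apply (nRF_word_notin B (image g) n (image_subgroup C B g g_hom) RFB b Nb wB); [| exact FB | |].
  - intros ->. apply Hne. reflexivity.
  - exact (reduced_map_coeffs B P iB wB (hom1 iB_hom) Hr).
  - intro e. rewrite <- (nsign_map_coeffs iB). apply Hb.
Qed.

(* Induction on the syllable length of [x], exchanging the roles of the two factors. *)
Theorem word_eval_altBB n (Hn : forall m, n = Some m -> 2 <= m) {A B C P f g iA iB k x} :
  nRF_amalgam A B C P f g iA iB n -> alt_prod A B C P f g iA iB false false k x ->
  forall w, w <> [] -> coeffs_in (image (fun c => iA (f c))) w -> reduced w -> bounded n w ->
  exists k', alt_prod A B C P f g iA iB false false k' (word_eval x w).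
Proof.
  revert A B C P f g iA iB x. induction k as [k IH] using lt_wf_ind.
  intros A B C P f g iA iB x HA HR.
  inversion HR as [| b Nb | | b1 en k' y Nb1 Hy]; subst.
  { intros w Hne F Hr Hb. exists 1. apply (word_eval_syllableB HA); assumption. }
  destruct (alt_prod_endB Hy) as [[E _]|[k'' [x' [bl [-> [Hx' [Nbl ->]]]]]]];
    [discriminate |].
  rewrite mulgA. apply (word_eval_altBB_step A B C P f g iA iB n Hn HA b1 bl x' Nb1 Nbl).
  intros w Hne F Hr Hb.
  destruct (IH k'' ltac:(lia) B A C P g f iB iA x' (nRF_amalgam_swap HA) (alt_prod_swap Hx') w Hne)
    as [k3 R3]; [| assumption .. |].
  - eapply Forall_impl; [| exact F]. intros p. apply inC_swap, (amalgam_comm (am_universal HA)).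
  - exists k3. exact (alt_prod_swapE (st := true) (en := true) R3).
Qed.

(** * The factors of an amalgam are n-RF *)

(* When [x^e = hf e * x0^e * tf e], a word in [x] becomes a word in [x0] whose coefficients
   absorb the outer factors; the last one absorbs [hf e1] (see [conj_word_eval]). *)
Fixpoint conj_word {G : Grp} (hf tf : bool -> G) (e1 : bool) (w : list (bool * G)) :
    list (bool * G) :=
  match w with
  | [] => []
  | (e, d) :: r => (e, tf e ** d ** hf (match r with [] => e1 | p :: _ => fst p end))
                   :: conj_word hf tf e1 r
  end.

Section ConjWord.
Variables (G : Grp) (hf tf : bool -> G).
Hypothesis hf_tf : forall e, hf (negb e) = ginv (tf e).

Lemma conj_word_eval (x x0 : G) e1 w :
  (forall e, gpow e x = hf e ** gpow e x0 ** tf e) -> w <> [] ->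
  word_eval x w ** hf e1 = hf (fst (hd (true, gone) w)) ** word_eval x0 (conj_word hf tf e1 w).
Proof.
  intro Hx. induction w as [|[e d] [|[e' d'] r] IH]; intro Hne; [congruence | |].
  - simpl. rewrite Hx, !mulg1, !mulgA. reflexivity.
  - change (word_eval x ((e, d) :: (e', d') :: r) ** hf e1 = hf e **
      word_eval x0 ((e, tf e ** d ** hf e') :: conj_word hf tf e1 ((e', d') :: r))).
    change (word_eval x ((e, d) :: (e', d') :: r))
      with (gpow e x ** d ** word_eval x ((e', d') :: r)).
    rewrite <- mulgA, IH by discriminate. simpl. rewrite Hx, !mulgA.
    reflexivity.
Qed.

Lemma nsign_conj_word e e1 (w : list (bool * G)) : nsign e (conj_word hf tf e1 w) = nsign e w.
Proof.
  induction w as [|[e' d] r IH]; [reflexivity |]. simpl. rewrite !nsign_cons, IH. reflexivity.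
Qed.

Lemma conj_word_nil e1 (w : list (bool * G)) : w <> [] -> conj_word hf tf e1 w <> [].
Proof. destruct w as [|[e d] r]; simpl; congruence. Qed.

Lemma conj_no_cancel e d : d <> gone -> tf e ** d ** hf (negb e) <> gone.
Proof. intros Hd E. rewrite hf_tf in E. exact (Hd (conjg_eq1 _ _ E)). Qed.

Lemma conj_word_reduced e1 (w : list (bool * G)) : reduced w -> reduced (conj_word hf tf e1 w).
Proof.
  induction w as [|[e d] [|[e' d'] r] IH]; simpl; auto.
  intros [J R]. split; [| exact (IH R)].
  intro E. simpl in *. replace e' with (negb e) by (rewrite E; destruct e'; reflexivity).
  apply conj_no_cancel, J, E.
Qed.

Lemma conj_word_last e1 (u : list (bool * G)) e d p :
  last (conj_word hf tf e1 (u ++ [(e, d)])) p = (e, tf e ** d ** hf e1).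
Proof.
  induction u as [|[e' d'] u IH]; [reflexivity |]. simpl.
  destruct (u ++ [(e, d)]) as [|[eq dq] l] eqn:El; [destruct u; discriminate |].
  rewrite <- IH. reflexivity.
Qed.

Lemma conj_word_cyc_reduced (w : list (bool * G)) :
  cyc_reduced w -> cyc_reduced (conj_word hf tf (fst (hd (true, gone) w)) w).
Proof.
  intros [R L]. split; [apply conj_word_reduced, R |].
  intros p0 r E. destruct w as [|[e1 d1] w']; [discriminate |].
  simpl in E. injection E as <- _. simpl fst.
  destruct (exists_last (l := (e1, d1) :: w') ltac:(discriminate)) as [u [[em dm] Eu]].
  specialize (L _ _ eq_refl). rewrite Eu in L |- *. rewrite conj_word_last.
  rewrite (last_indep _ _ (true, gone)), last_app_cons in L by (destruct u; discriminate).
  intro E. simpl in *. replace e1 with (negb em) by (rewrite E; destruct e1; reflexivity).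
  apply conj_no_cancel, L, E.
Qed.

Lemma coeffs_in_conj_word (D : G -> Prop) e1 w : subgroup D ->
  (forall e, D (hf e)) -> (forall e, D (tf e)) ->
  coeffs_in D w -> coeffs_in D (conj_word hf tf e1 w).
Proof.
  intros [_ [DM _]] Dh Dt F. induction F as [|[e d] r Hd F IH]; simpl; constructor; auto.
  apply DM; [apply DM |]; auto.
Qed.

End ConjWord.

Lemma Forall_first_fail {T : Type} (Q : T -> Prop) (l : list T) :
  ~ Forall Q l -> exists u p v, l = u ++ p :: v /\ Forall Q u /\ ~ Q p.
Proof.
  induction l as [|a l IH]; intro N; [exfalso; apply N; constructor |].
  destruct (classic (Q a)) as [Qa|Na]; [| exists [], a, l; auto].
  destruct IH as [u [p [v [-> [F Np]]]]]; [intro F; apply N; constructor; auto |].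
  exists (a :: u), p, v. auto.
Qed.

Section CyclicWords.
Variables (A B C P : Grp) (f : C -> A) (g : C -> B) (iA : A -> P) (iB : B -> P) (n : option nat).
Hypothesis Hn : forall m, n = Some m -> 2 <= m.
Hypothesis HA : nRF_amalgam A B C P f g iA iB n.

Let f_hom := am_f_hom HA.
Let iA_hom := amalgam_homA (am_universal HA).
Let alt_neq1 := alt_prod_neq1 A B C P f g iA iB f_hom (am_g_hom HA) (am_f_inj HA) (am_g_inj HA)
                  (am_universal HA).

Notation alt := (alt_prod A B C P f g iA iB).
Notation inC := (image (fun c => iA (f c))).

Variables (x0 : P) (k0 : nat).
Hypothesis x0_alt : alt false false k0 x0.

(* Cut after the first coefficient outside [C]: the prefix gives a [B...B] product by
   [word_eval_altBB], the cut coefficient an [A]-syllable, and the rest recursively. *)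
Lemma word_eval_altBA L : L <> [] -> coeffs_in (image iA) L -> reduced L -> bounded n L ->
  ~ inC (snd (last L (true, gone))) -> exists k, alt false true k (word_eval x0 L).
Proof.
  induction L as [L IH] using (induction_ltof1 _ (@length _)). unfold ltof in IH.
  intros Hne F Hr Hb NL.
  destruct (Forall_first_fail (fun p => inC (snd p)) L) as [u [[e d] [v [EL [Fu Nd]]]]].
  { intro FA. apply NL. rewrite Forall_forall in FA. apply FA.
    destruct (exists_last Hne) as [l [z ->]]. rewrite last_app_cons. apply in_or_app. simpl. auto. }
  simpl in Nd.
  replace L with ((u ++ [(e, d)]) ++ v) in * by (rewrite EL, <- app_assoc; reflexivity).
  clear EL. destruct (proj1 (Forall_app _ _ _) F) as [F1 Fv]. apply Forall_app in F1 as [_ Fd].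
  inversion Fd as [|? ? [a Ea] _]. simpl in Ea. subst d.
  assert (Na : ~ image f a) by (intros [c ->]; apply Nd; exists c; reflexivity).
  destruct (word_eval_altBB n Hn HA x0_alt (u ++ [(e, gone)])) as [k1 R1].
  - destruct u; discriminate.
  - apply Forall_app. split; [exact Fu | repeat constructor].
    exists gone. rewrite (hom1 f_hom), (hom1 iA_hom). reflexivity.
  - apply (reduced_snoc (d := iA a)). exact (reduced_prefix _ _ Hr).
  - refine (bounded_le n _ _ _ Hb). intro e'.
    rewrite !nsign_app. unfold nsign. destruct e', e; simpl; lia.
  - assert (Esplit : word_eval x0 (u ++ [(e, iA a)]) = word_eval x0 (u ++ [(e, gone)]) ** iA a)
      by (rewrite word_eval_snoc, mul1g; reflexivity).
    rewrite word_eval_app, Esplit.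
    assert (R2 := alt_prod_cat (s2 := true) R1 (alt_A a Na) eq_refl).
    destruct v as [|pv v'].
    { exists (k1 + 1). change (word_eval x0 []) with (@gone P). rewrite mulg1. exact R2. }
    destruct (IH (pv :: v')) as [k3 R3].
    + rewrite !length_app. simpl. lia.
    + discriminate.
    + exact Fv.
    + exact (reduced_suffix _ _ Hr).
    + refine (bounded_le n _ _ _ Hb). intro e'. rewrite nsign_app. lia.
    + rewrite last_app_cons in NL. exact NL.
    + exists (k1 + 1 + k3). exact (alt_prod_cat R2 R3 eq_refl).
Qed.

Lemma word_eval_cyc_neq1 w : w <> [] -> coeffs_in (image iA) w -> cyc_reduced w -> bounded n w ->
  word_eval x0 w <> gone.
Proof.
  intros Hne F Hc Hb. destruct (classic (coeffs_in inC w)) as [FC|NFC].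
  { destruct (word_eval_altBB n Hn HA x0_alt w Hne FC (proj1 Hc) Hb) as [k R].
    exact (alt_neq1 _ _ _ _ R). }
  destruct (Forall_first_fail _ w NFC) as [u [[e d] [v [Ew [_ Nd]]]]].
  set (U := u ++ [(e, d)]).
  assert (Ew' : w = U ++ v) by (rewrite Ew; unfold U; rewrite <- app_assoc; reflexivity).
  assert (NU : ~ inC (snd (last (v ++ U) (true, gone))))
    by (unfold U; rewrite app_assoc, last_app_cons; exact Nd).
  assert (HcR : cyc_reduced (v ++ U)).
  { destruct v as [|pv v']; [rewrite Ew', app_nil_r in Hc; exact Hc |].
    apply cyc_reduced_rot; [unfold U; destruct u; discriminate | discriminate |].
    rewrite <- Ew'. exact Hc. }
  destruct (word_eval_altBA (v ++ U)) as [k R].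
  - unfold U. destruct v, u; discriminate.
  - rewrite Ew' in F. apply Forall_app in F. apply Forall_app. tauto.
  - exact (proj1 HcR).
  - refine (bounded_le n _ _ _ Hb). intro e'. rewrite Ew', !nsign_app. lia.
  - exact NU.
  - apply alt_neq1 in R.
    rewrite Ew', word_eval_app. rewrite word_eval_app in R. intro E. apply R.
    apply mulg_eq1_l in E. rewrite E. apply mulgV.
Qed.

End CyclicWords.

Theorem amalgam_nRF_left n (Hn : forall m, n = Some m -> 2 <= m) {A B C P f g iA iB} :
  nRF_amalgam A B C P f g iA iB n -> nRF_pair P (image iA) n.
Proof.
  intro HA. pose proof (amalgam_homA (am_universal HA)) as iA_hom.
  intros x Nx. apply nRF_relE. intros w Hne F Hc Hb E.
  destruct (amalgam_decomp A B C P f g iA iB (am_g_hom HA)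
              (am_universal HA) x Nx) as [a0 [a1 [k0 [x0 [HR0 ->]]]]].
  set (hf := fun e : bool => iA (if e then a0 else ginv a1)).
  set (tf := fun e : bool => iA (if e then a1 else ginv a0)).
  assert (hf_tf : forall e, hf (negb e) = ginv (tf e))
    by (intros []; unfold hf, tf; simpl; rewrite (homV iA_hom), ?invgK; reflexivity).
  assert (Hx : forall e, gpow e (iA a0 ** x0 ** iA a1) = hf e ** gpow e x0 ** tf e).
  { intros []; unfold hf, tf; simpl; [reflexivity |].
    rewrite !invgM, !(homV iA_hom), !mulgA. reflexivity. }
  set (e1 := fst (hd (true, gone) w)).
  apply (word_eval_cyc_neq1 A B C P f g iA iB n Hn HA x0 k0 HR0 (conj_word hf tf e1 w)).
  - apply conj_word_nil, Hne.
  - apply coeffs_in_conj_word; [apply image_subgroup, iA_hom | intro; eexists; reflexivity ..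
                                | exact F].
  - apply conj_word_cyc_reduced, Hc. exact hf_tf.
  - intro e. rewrite nsign_conj_word. apply Hb.
  - pose proof (conj_word_eval P hf tf _ _ e1 w Hx Hne) as Ew. fold e1 in Ew.
    rewrite E, mul1g in Ew. apply (mulg_injl (hf e1)). rewrite mulg1. symmetry. exact Ew.
Qed.

Theorem amalgam_nRF n (Hn : forall m, n = Some m -> 2 <= m) {A B C P f g iA iB} :
  nRF_amalgam A B C P f g iA iB n ->
  injective iB /\ nRF_pair P (image iA) n /\ nRF_pair P (image iB) n.
Proof.
  intro HA. pose proof (nRF_amalgam_swap HA) as [g_hom f_hom g_inj f_inj Ham _ _].
  split; [exact (amalgam_inj_left B A C P g f iB iA g_hom f_hom g_inj f_inj Ham) |].
  split; [exact (amalgam_nRF_left n Hn HA) |].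
  exact (amalgam_nRF_left n Hn (nRF_amalgam_swap HA)).
Qed.

(** * Iterated amalgams *)

Definition nRF_embedding (H G : Grp) (phi : H -> G) (n : option nat) : Prop :=
  is_hom H G phi /\ injective phi /\ nRF_pair G (image phi) n.

Lemma nRF_amalgam_intro n (G H H' C P : Grp) (phi : H -> G) (a : C -> H) (b : C -> H')
    (iG : G -> P) (iH' : H' -> P) :
  nRF_embedding H G phi n ->
  is_hom C H a -> injective a -> nRF_pair H (image a) n ->
  is_hom C H' b -> injective b -> nRF_pair H' (image b) n ->
  is_amalgam C G H' P (fun c => phi (a c)) b iG iH' ->
  nRF_amalgam G H' C P (fun c => phi (a c)) b iG iH' n.
Proof.
  intros [phi_hom [phi_inj phi_RF]] a_hom a_inj a_RF b_hom b_inj b_RF Ham. constructor; auto.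
  - apply hom_comp; assumption.
  - apply inj_comp; assumption.
  - apply nRF_pair_comp; assumption.
Qed.

Theorem lemma6p3
  (n : option nat) (Hn : forall m, n = Some m -> 2 <= m)
  (k : nat) (Hk : 1 <= k)
  (H C G : nat -> Grp)
  (a : forall i, C i -> H i) (b : forall i, C i -> H (S i))
  (phi : forall i, H i -> G i) (iota : forall i, G i -> G (S i))
  (Ha : forall i, 1 <= i <= k -> is_hom (C i) (H i) (a i) /\ injective (a i))
  (Hb : forall i, 1 <= i <= k -> is_hom (C i) (H (S i)) (b i) /\ injective (b i))
  (HG1 : is_hom (H 1) (G 1) (phi 1) /\ injective (phi 1) /\
         (forall y : G 1, exists x, phi 1 x = y))
  (HGS : forall i, 1 <= i <= k ->
     is_amalgam (C i) (G i) (H (S i)) (G (S i))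
       (fun c => phi i (a i c)) (b i) (iota i) (phi (S i)))
  (HRFa : forall i, 1 <= i <= k -> nRF_pair (H i) (image (a i)) n)
  (HRFb : forall i, 1 <= i <= k -> nRF_pair (H (S i)) (image (b i)) n) :
  nRF_pair (G (S k)) (image (iota k)) n /\
  nRF_pair (G (S k)) (image (phi (S k))) n.
Proof.
  assert (Hstep : forall i, 1 <= i <= k -> nRF_embedding (H i) (G i) (phi i) n ->
            nRF_amalgam (G i) (H (S i)) (C i) (G (S i))
              (fun c => phi i (a i c)) (b i) (iota i) (phi (S i)) n).
  { intros i Hi Hphi. destruct (Ha i Hi), (Hb i Hi).
    apply nRF_amalgam_intro; auto. }
  assert (Hlast : forall j, j <= k -> nRF_embedding (H (S j)) (G (S j)) (phi (S j)) n).
  { induction j as [|j IHj]; intro Hj.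
    - destruct HG1 as [phi_hom [phi_inj phi_surj]].
      split; [exact phi_hom | split; [exact phi_inj |]].
      intros y Ny. exfalso. destruct (phi_surj y) as [x <-]. apply Ny. exists x. reflexivity.
    - pose proof (Hstep (S j) ltac:(lia) (IHj ltac:(lia))) as HA.
      destruct (amalgam_nRF n Hn HA) as [inj [_ RF]].
      split; [exact (amalgam_homB (am_universal HA)) | auto]. }
  destruct k as [|k']; [lia |].
  exact (proj2 (amalgam_nRF n Hn (Hstep (S k') ltac:(lia) (Hlast k' ltac:(lia))))).
Qed.
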